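(* Let $G$ be a graph containing no cycle of length 6, let $x\in V(G)$, and let $A$ be a connected component of $G[N_2(x)]$. Then at least one of the following holds: (1) $|V(A)|=1$; (2) $|N(x)\cap N(V(A))|=1$; (3) $A$ is isomorphic to $K_{1,r}$ for some $r\ge 1$.
   Context: All graphs are finite, simple and undirected; ''containing no cycle of length 6'' means having no subgraph (not necessarily induced) isomorphic to $C_6$. $N_i(S)$ denotes the set of vertices at distance exactly $i$ from the vertex set $S$, $N(S)=N_1(S)$, $N(v)=N(\{v\})$, $N_2(v)=N_2(\{v\})$. *)

From mathcomp Require Import all_boot.
Set Implicit Arguments. Unset Strict Implicit. Unset Printing Implicit Defensive.

Definition simple_graph (T : finType) (e : rel T) : Prop :=
  symmetric e /\ irreflexive e.

Definition has_C6 (T : finType) (e : rel T) : Prop :=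
  exists f : 'I_6 -> T, injective f /\
    forall i : 'I_6, e (f i) (f (ordS i)).

Definition nbhd_set (T : finType) (e : rel T) (S : {set T}) : {set T} :=
  [set v | (v \notin S) && [exists u in S, e u v]].

Definition N2 (T : finType) (e : rel T) (x : T) : {set T} :=
  [set v | [&& v != x, ~~ e x v & [exists w, e x w && e w v]]].

Definition induced_rel (T : finType) (e : rel T) (S : {set T}) : rel T :=
  fun u v => [&& u \in S, v \in S & e u v].

Definition is_component (T : finType) (e : rel T) (S A : {set T}) : Prop :=
  exists2 a, a \in S & A = [set v in S | connect (induced_rel e S) a v].

Definition star_rel (r : nat) : rel 'I_r.+1 :=
  fun i j => ((i == ord0) && (j != ord0)) || ((j == ord0) && (i != ord0)).

Definition induced_iso_star (T : finType) (e : rel T) (A : {set T}) (r : nat)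
  : Prop :=
  exists f : 'I_r.+1 -> T,
    [/\ injective f, forall v, v \in A -> exists i, f i = v,
        forall i, f i \in A &
        forall i j, e (f i) (f j) = star_rel i j].

From mathcomp Require Import all_boot.
Set Implicit Arguments. Unset Strict Implicit. Unset Printing Implicit Defensive.

(* For v in N_2(x) call the vertices of N(x) \cap N(v) the midpoints of v.
   If u0 u1 u2 is a path in G[N_2(x)], any midpoints w of u0 and w' of u2
   coincide, since otherwise x w u0 u1 u2 w' is a 6-cycle; for a path
   u0 u1 u2 u3 the same holds for u0 and u3, through the 6-cycle
   w u0 u1 w' u3 u2. Hence, if A contains a triangle or a path on four
   vertices, some edge of A has both ends with the same unique midpoint, and
   this spreads along A: every vertex of A has the same unique midpoint, i.e.
   |N(x) \cap N(A)| = 1. Otherwise A is a connected graph without triangles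
   and without paths on four vertices, hence a star or a single vertex. *)

Lemma star_of_center (T : finType) (e : rel T) (A : {set T}) c :
  simple_graph e -> c \in A -> 1 < #|A| ->
  (forall v, v \in A -> v != c -> e c v) ->
  (forall u v, u \in A -> v \in A -> u != c -> v != c -> ~~ e u v) ->
  exists2 r, 1 <= r & induced_iso_star e A r.
Proof.
move=> [sym_e irr_e] cA A2 c_nbr leaves_indep.
have cardA : #|A| = #|A :\ c|.+1 by rewrite (cardsD1 c A) cA.
set L := enum (A :\ c).
have sizeL : size L = #|A :\ c| by rewrite /L -cardE.
have inL k : k < #|A :\ c| -> nth c L k \in A :\ c.
  by move=> Hk; rewrite -mem_enum; apply: mem_nth; rewrite sizeL.
exists #|A :\ c|; first by rewrite -ltnS -cardA.
exists (fun i : 'I_(#|A :\ c|).+1 => if val i is k.+1 then nth c L k else c).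
split.
- move=> [[|i] Hi] [[|j] Hj] //= E; apply: val_inj => //=.
  + by have := inL j Hj; rewrite -E !inE eqxx.
  + by have := inL i Hi; rewrite E !inE eqxx.
  + congr _.+1; apply/eqP.
    by rewrite -(nth_uniq c _ _ (enum_uniq (mem (A :\ c)))) ?E -/L ?sizeL.
- move=> v vA; have [->|vc] := eqVneq v c; first by exists ord0.
  have vL : v \in L by rewrite mem_enum !inE vc.
  have Hk : (index v L).+1 < (#|A :\ c|).+1 by rewrite ltnS -sizeL index_mem.
  by exists (Ordinal Hk) => /=; rewrite nth_index.
- move=> [[|i] Hi] //=.
  by have := inL i Hi; rewrite !inE => /andP[].
- move=> [[|i] Hi] [[|j] Hj]; rewrite /star_rel /=.
  + by rewrite irr_e.
  + by have := inL j Hj; rewrite !inE => /andP[? ?]; rewrite c_nbr.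
  + by have := inL i Hi; rewrite !inE => /andP[? ?]; rewrite sym_e c_nbr.
  + have := inL i Hi; have := inL j Hj; rewrite !inE => /andP[? ?] /andP[? ?].
    exact/negbTE/leaves_indep.
Qed.

(* A non-backtracking walk u c y z in A; since [u = z] is allowed, it spans
   either a triangle or a path on four vertices. *)
Definition nb_walk3 (T : finType) (e : rel T) (A : {set T}) (u c y z : T) : bool :=
  [&& u \in A, c \in A, y \in A, z \in A, e u c, e c y, e y z, u != y & c != z].

Section Components.

Variables (T : finType) (e : rel T) (S A : {set T}).
Hypotheses (sym_e : symmetric e) (compA : is_component e S A).

Local Notation r := (induced_rel e S).

Lemma component_sub v : v \in A -> v \in S.
Proof. by case: compA => a _ ->; rewrite inE => /andP[]. Qed.

Lemma component_connect p q : p \in A -> q \in A -> connect r p q.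
Proof.
have rsym : connect_sym r by apply: sym_connect_sym => u v; rewrite /induced_rel sym_e andbCA.
case: compA => a _ ->; rewrite !inE => /andP[_ ap] /andP[_ aq].
by apply: connect_trans aq; rewrite rsym.
Qed.

Lemma component_step p q : p \in A -> r p q -> q \in A.
Proof.
case: compA => a _ ->; rewrite !inE => /andP[_ ap] rpq.
by rewrite (connect_trans ap (connect1 rpq)) andbT; case/and3P: rpq.
Qed.

Lemma component_path2 p v : p \in A -> v \in A -> v != p ->
  e p v \/ exists y z, [/\ y \in A, z \in A, e p y, e y z & z != p].
Proof.
move=> pA vA; have /connectP[s sp ->] := component_connect pA vA.
case: (shortenP sp) => -[|y [|z t]] /=.
- by rewrite eqxx.
- by move=> /andP[/and3P[_ _ ->]]; left.
move=> /and3P[ry ryz _]; rewrite !inE !negb_or => /andP[/and3P[_ zp _] _] _ _; right.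
have yA := component_step pA ry; have zA := component_step yA ryz.
by exists y, z; split=> //; [case/and3P: ry | case/and3P: ryz | rewrite eq_sym].
Qed.

Section Stars.

Hypotheses (irr_e : irreflexive e) (A2 : 1 < #|A|)
  (no_walk3 : forall u c y z, ~~ nb_walk3 e A u c y z).

(* A vertex of degree at least 2 in A is a hub; if there is none, any vertex is. *)
Lemma component_hub : exists2 c, c \in A &
  forall y z, y \in A -> z \in A -> e c y -> e y z -> z = c.
Proof.
have [|deg_le1] := boolP [exists c, exists u, exists y,
    [&& c \in A, u \in A, y \in A, e c u, e c y & u != y]].
  move=> /existsP[c /existsP[u0 /existsP[u1 /and5P[cA u0A u1A cu0 /andP[cu1 u01]]]]].
  exists c => // y z yA zA cy yz; apply/eqP/negPn/negP => zc.
  have [u [uA cu uy]] : exists u, [/\ u \in A, e c u & u != y].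
    by case: (eqVneq u0 y) => [<-|]; [exists u1; rewrite eq_sym | exists u0].
  have /negP := no_walk3 u c y z; apply.
  by rewrite /nb_walk3 uA cA yA zA sym_e cu cy yz uy eq_sym zc.
have /card_gt0P[a aA] := ltnW A2.
exists a => // y z yA zA ay yz; apply/eqP/negPn/negP => za.
apply: (negP deg_le1); apply/existsP; exists y; apply/existsP; exists a; apply/existsP; exists z.
by rewrite yA aA zA sym_e ay yz eq_sym za.
Qed.

Lemma component_star : exists2 r, 1 <= r & induced_iso_star e A r.
Proof.
have [c cA hub] := component_hub.
have c_nbr v : v \in A -> v != c -> e c v.
  move=> vA vc; case: (component_path2 cA vA vc) => // -[y [z [yA zA cy yz zc]]].
  by rewrite (hub y z) ?eqxx in zc.
apply: (star_of_center (conj sym_e irr_e) cA A2 c_nbr) => u v uA vA uc vc.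
by apply/negP => uv; rewrite (hub u v) ?c_nbr ?eqxx in vc.
Qed.

End Stars.

End Components.

Lemma has_C6_uniq (T : finType) (e : rel T) (a0 a1 a2 a3 a4 a5 : T) :
  uniq [:: a0; a1; a2; a3; a4; a5] -> e a0 a1 -> e a1 a2 -> e a2 a3 ->
  e a3 a4 -> e a4 a5 -> e a5 a0 -> has_C6 e.
Proof.
move=> a_uniq e01 e12 e23 e34 e45 e50.
exists (fun i : 'I_6 => nth a0 [:: a0; a1; a2; a3; a4; a5] i); split.
  by move=> i j /eqP; rewrite nth_uniq // => /eqP /val_inj.
by case=> [[|[|[|[|[|[|?]]]]]] Hi].
Qed.

Section NoC6.

Variables (T : finType) (e : rel T) (x : T).
Hypotheses (sym_e : symmetric e) (irr_e : irreflexive e) (noC6 : ~ has_C6 e).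

Definition midpoints (v : T) : pred T := [pred w | e x w && e w v].

(* For p, q in N_2(x), whose midpoint sets are nonempty, this says that p and
   q have one and the same midpoint. *)
Definition same_midpoint (p q : T) : Prop :=
  forall w w', w \in midpoints p -> w' \in midpoints q -> w = w'.

Lemma edge_neq u v : e u v -> u != v.
Proof. by apply: contraTneq => ->; rewrite irr_e. Qed.

Lemma N2_midpoint v : v \in N2 e x -> exists w, w \in midpoints v.
Proof. by rewrite inE => /and3P[_ _ /existsP]. Qed.

Lemma midpoint_neq_N2 w v : e x w -> v \in N2 e x -> w != v.
Proof. by move=> xw; rewrite inE => /and3P[_ xv _]; apply: contraNneq xv => <-. Qed.

Lemma N2_neq v : v \in N2 e x -> x != v.
Proof. by rewrite inE eq_sym => /andP[]. Qed.

Lemma same_midpointC p q : same_midpoint p q -> same_midpoint q p.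
Proof. by move=> spq w w' wq w'p; rewrite (spq w' w). Qed.

Lemma same_midpoint_trans q p r : q \in N2 e x ->
  same_midpoint p q -> same_midpoint q r -> same_midpoint p r.
Proof.
move=> /N2_midpoint[wq wqq] spq sqr w w' wp w'r.
by rewrite (spq w wq) // (sqr wq w').
Qed.

Lemma same_midpoint_path3 u0 u1 u2 :
  u0 \in N2 e x -> u1 \in N2 e x -> u2 \in N2 e x ->
  u0 != u2 -> e u0 u1 -> e u1 u2 -> same_midpoint u0 u2.
Proof.
move=> u0N u1N u2N u02 e01 e12 w w' /andP[xw wu0] /andP[xw' w'u2].
apply/eqP/negPn/negP => ww'; apply: noC6.
apply: (@has_C6_uniq _ e x w u0 u1 u2 w'); rewrite // 1?sym_e //.
move: (N2_neq u0N) (N2_neq u1N) (N2_neq u2N) => xu0 xu1 xu2.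
have wN v : v \in N2 e x -> w != v := midpoint_neq_N2 xw.
have w'N v : v \in N2 e x -> w' != v := midpoint_neq_N2 xw'.
rewrite /= !inE !negb_or (edge_neq xw) (edge_neq xw') (edge_neq e01) (edge_neq e12).
by rewrite ww' ![_ == w']eq_sym xu0 xu1 xu2 u02 !wN ?w'N.
Qed.

Lemma same_midpoint_path4 u0 u1 u2 u3 :
  u0 \in N2 e x -> u1 \in N2 e x -> u2 \in N2 e x -> u3 \in N2 e x ->
  uniq [:: u0; u1; u2; u3] -> e u0 u1 -> e u1 u2 -> e u2 u3 ->
  same_midpoint u0 u3.
Proof.
move=> u0N u1N u2N u3N u_uniq e01 e12 e23 w w' wu0 w'u3.
have [w1 w1u1] := N2_midpoint u1N; have [w2 w2u2] := N2_midpoint u2N.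
move: u_uniq; rewrite /= !inE !negb_or => /and4P[/and3P[u01 u02 u03] /andP[u12 u13] u23 _].
have ww2 := same_midpoint_path3 u0N u1N u2N u02 e01 e12 wu0 w2u2.
have w1w' := same_midpoint_path3 u1N u2N u3N u13 e12 e23 w1u1 w'u3.
subst w w'; move: wu0 w1u1 w'u3 w2u2.
move=> /andP[xw wu0] /andP[xw' w'u1] /andP[_ w'u3] /andP[_ wu2].
apply/eqP/negPn/negP => ww'; apply: noC6.
apply: (@has_C6_uniq _ e w2 u0 u1 w1 u3 u2) => //; rewrite 1?sym_e //.
have wN v : v \in N2 e x -> w2 != v := midpoint_neq_N2 xw.
have w'N v : v \in N2 e x -> w1 != v := midpoint_neq_N2 xw'.
rewrite /= !inE !negb_or ww' u01 u03 u02 u13 u12 ![_ == w1]eq_sym (eq_sym u3) u23.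
by rewrite !wN ?w'N.
Qed.

Section Component.

Variable A : {set T}.
Hypothesis compA : is_component e (N2 e x) A.

Local Notation A_N2 := (component_sub compA).

Lemma same_midpoint_component u y : u \in A -> y \in A -> e u y ->
  same_midpoint u y -> forall v, v \in A -> same_midpoint u v.
Proof.
move=> uA yA uy suy v vA; move: (A_N2 uA) (A_N2 yA) => uN yN.
have /connectP[s us ->] := component_connect sym_e compA uA vA.
suff: forall p q, p \in N2 e x -> q \in N2 e x -> e p q ->
    same_midpoint u p -> same_midpoint u q -> path (induced_rel e (N2 e x)) q s ->
    same_midpoint u (last q s).
  move=> /(_ y u yN uN); apply=> //; first by rewrite sym_e.
  exact: same_midpoint_trans yN suy (same_midpointC suy).
elim: s {us} => [|z s IH] p q pN qN pq sup suq //= /andP[/and3P[_ zN qz] zs].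
apply: (IH q z) => //; have [<- //|pz] := eqVneq p z.
exact: same_midpoint_trans pN sup (same_midpoint_path3 pN qN zN pz pq qz).
Qed.

Lemma nbhd_card_same_midpoint u : u \in A ->
  (forall v, v \in A -> same_midpoint u v) ->
  #|nbhd_set e [set x] :&: nbhd_set e A| = 1.
Proof.
move=> uA su; have [wu wuu] := N2_midpoint (A_N2 uA).
suff -> : nbhd_set e [set x] :&: nbhd_set e A = [set wu] by rewrite cards1.
apply/setP => w; rewrite !inE; apply/idP/eqP.
  case/and3P=> /andP[_ /existsP[x' /andP[/set1P -> xw]]] _ /existsP[p /andP[pA pw]].
  by apply/esym/(su p pA); rewrite // inE xw sym_e.
move=> ->; case/andP: wuu => xwu wuu.
have wuA : wu \notin A by apply: contraL xwu => /A_N2; rewrite inE => /and3P[].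
rewrite wuA eq_sym (edge_neq xwu) /=; apply/andP; split.
  by apply/existsP; exists x; rewrite inE eqxx.
by apply/existsP; exists u; rewrite uA sym_e.
Qed.

Lemma nb_walk3_same_midpoint u c y z : nb_walk3 e A u c y z ->
  exists p q, [/\ p \in A, q \in A, e p q & same_midpoint p q].
Proof.
case/and5P=> uA cA yA zA /and5P[uc cy yz uy cz].
move: (A_N2 uA) (A_N2 cA) (A_N2 yA) (A_N2 zA) => uN cN yN zN.
have [zu|zu] := eqVneq z u.
  subst z; exists c, u; rewrite sym_e; split=> //.
  by apply: same_midpoint_path3 cN yN uN _ cy yz; rewrite eq_sym (edge_neq uc).
have u_uniq : uniq [:: u; c; y; z].
  by rewrite /= !inE !negb_or uy cz (eq_sym u z) zu !edge_neq.
exists u, c; split=> //; apply: (same_midpoint_trans zN _ (same_midpointC _)).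
  exact: same_midpoint_path4 uN cN yN zN u_uniq uc cy yz.
exact: same_midpoint_path3 cN yN zN cz cy yz.
Qed.

End Component.

End NoC6.

Theorem corollary2p6 (T : finType) (e : rel T) (x : T) (A : {set T}) :
  simple_graph e -> ~ has_C6 e ->
  is_component e (N2 e x) A ->
  [\/ #|A| = 1,
      #|nbhd_set e [set x] :&: nbhd_set e A| = 1 |
      exists2 r, 1 <= r & induced_iso_star e A r].
Proof.
move=> [sym_e irr_e] noC6 compA.
have [A1|A1] := eqVneq #|A| 1; first exact: Or31.
have A2 : 1 < #|A|.
  case: compA => a aN defA; rewrite ltn_neqAle eq_sym A1; apply/card_gt0P.
  by exists a; rewrite defA inE aN connect0.
have [walk|no_walk] := boolP [exists u, exists c, exists y, exists z, nb_walk3 e A u c y z].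
  apply: Or32; move: walk => /existsP[u /existsP[c /existsP[y /existsP[z walk]]]].
  have [p [q [pA qA pq spq]]] := nb_walk3_same_midpoint sym_e irr_e noC6 compA walk.
  apply: (nbhd_card_same_midpoint sym_e irr_e compA pA) => v vA.
  exact: (same_midpoint_component sym_e irr_e noC6 compA pA qA pq spq vA).
apply: Or33; apply: (component_star sym_e compA irr_e A2) => u c y z.
by apply: contra no_walk => walk; apply/existsP; exists u; apply/existsP; exists c;
  apply/existsP; exists y; apply/existsP; exists z.
Qed.
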